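(* Let $(X_t)_{t\ge0}$ be a positive recurrent continuous-time Markov chain on a countable state space $E$ with semigroup $P_t$ and stationary distribution $\pi$, and assume $P_t$ is reversible with respect to $\pi$. Let $f:E\to[1,\infty)$ with $\pi(f^2)<\infty$. Then $P_t$ has exponential $f$-ergodicity if and only if the semigroup $P^f_t$ converges exponentially in the $L^2(\nu)$-norm. Moreover $\varepsilon_{\max}=\sigma_{\max}$.
   Context: $\|\mu\|_f:=\sup_{|g|\le f}|\mu(g)|=\sum_if(i)|\mu_i|$ for a signed measure $\mu$. Exponential $f$-ergodicity: there exist $\varepsilon>0$ and finite constants $C(i,f)$ with $\|P_t(i,\cdot)-\pi\|_f\le C(i,f)e^{-\varepsilon t}$ for all $i\in E,t\ge0$; $\varepsilon_{\max}$ is the supremum of such $\varepsilon$. The $h$-transform: $P_t^fg=\frac1fP_t(fg)$, $\pi^f(g)(i)=\frac1{f(i)}\sum_j\pi_jf(j)g(j)$, $\nu_i=f(i)^2\pi_i$. $P^f_t$ converges exponentially in the $L^2(\nu)$-norm if there is $\sigma>0$ with $\|P^f_tg-\pi^f(g)\|_{L^2(\nu)}\le \|g-\pi^f(g)\|_{L^2(\nu)}e^{-\sigma t}$ for all $t\ge0$, $g\in L^2(\nu)$; the largest such $\sigma$ is $\sigma_{\max}$. *)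

From Stdlib Require Import Reals ClassicalEpsilon.
Open Scope R_scope.

(* A countable state space E is given by an enumeration [enum : nat -> option E]
   hitting every state exactly once (finite or countably infinite E). *)
Definition enumerates {E : Type} (enum : nat -> option E) : Prop :=
  forall x : E, exists! n : nat, enum n = Some x.

Definition lift {E : Type} (enum : nat -> option E) (F : E -> R) (n : nat) : R :=
  match enum n with Some x => F x | None => 0 end.

Definition has_sum {E : Type} (enum : nat -> option E) (F : E -> R) (l : R) : Prop :=
  infinite_sum (lift enum F) l.

(* The value of a convergent series over E (used only for absolutely
   convergent series). *)
Definition ssum {E : Type} (enum : nat -> option E) (F : E -> R) : R :=
  epsilon (inhabits 0) (fun l => has_sum enum F l).

(* For a nonnegative family F: sum_{x in E} F x <= c  (in [0, +oo]). *)
Definition sum_le {E : Type} (enum : nat -> option E) (F : E -> R) (c : R) : Prop :=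
  forall N : nat, sum_f_R0 (lift enum F) N <= c.

Definition sum_finite {E : Type} (enum : nat -> option E) (F : E -> R) : Prop :=
  exists c, sum_le enum F c.

(* P : [0,oo) -> E -> E -> R is a standard honest transition function
   (the semigroup P_t of a continuous-time Markov chain on E). *)
Definition transition_function {E : Type} (enum : nat -> option E)
  (P : R -> E -> E -> R) : Prop :=
  (forall t i j, 0 <= t -> 0 <= P t i j) /\
  (forall t i, 0 <= t -> has_sum enum (P t i) 1) /\
  (forall i, P 0 i i = 1) /\
  (forall s t i k, 0 <= s -> 0 <= t ->
      has_sum enum (fun j => P s i j * P t j k) (P (s + t) i k)) /\
  (forall i eps, 0 < eps -> exists d, 0 < d /\
      forall t, 0 < t < d -> 1 - eps < P t i i).

Definition irreducible {E : Type} (P : R -> E -> E -> R) : Prop :=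
  forall t i j, 0 < t -> 0 < P t i j.

Definition stationary_distribution {E : Type} (enum : nat -> option E)
  (P : R -> E -> E -> R) (pi : E -> R) : Prop :=
  (forall i, 0 <= pi i) /\ has_sum enum pi 1 /\
  (forall t j, 0 <= t -> has_sum enum (fun i => pi i * P t i j) (pi j)).

(* Positive recurrent chain with stationary distribution pi
   (irreducible + invariant probability distribution). *)
Definition positive_recurrent {E : Type} (enum : nat -> option E)
  (P : R -> E -> E -> R) (pi : E -> R) : Prop :=
  transition_function enum P /\ irreducible P /\ stationary_distribution enum P pi.

Definition reversible {E : Type} (P : R -> E -> E -> R) (pi : E -> R) : Prop :=
  forall t i j, 0 <= t -> pi i * P t i j = pi j * P t j i.

Definition f_ergodic_rate {E : Type} (enum : nat -> option E)
  (P : R -> E -> E -> R) (pi : E -> R) (f : E -> R) (eps : R) : Prop :=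
  0 < eps /\ exists C : E -> R, forall i t, 0 <= t ->
    sum_le enum (fun j => f j * Rabs (P t i j - pi j)) (C i * exp (- eps * t)).

Definition exp_f_ergodic {E : Type} (enum : nat -> option E)
  (P : R -> E -> E -> R) (pi : E -> R) (f : E -> R) : Prop :=
  exists eps, f_ergodic_rate enum P pi f eps.

Definition nu {E : Type} (pi f : E -> R) (i : E) : R := f i ^ 2 * pi i.

Definition in_L2 {E : Type} (enum : nat -> option E) (pi f g : E -> R) : Prop :=
  sum_finite enum (fun i => nu pi f i * g i ^ 2).

Definition Pf {E : Type} (enum : nat -> option E) (P : R -> E -> E -> R)
  (f : E -> R) (t : R) (g : E -> R) (i : E) : R :=
  / f i * ssum enum (fun j => P t i j * (f j * g j)).

Definition pif {E : Type} (enum : nat -> option E) (pi f g : E -> R) (i : E) : R :=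
  / f i * ssum enum (fun j => pi j * f j * g j).

(* Exponential L^2(nu) convergence of P^f_t with rate sigma:
   ||P^f_t g - pi^f(g)||_{L2(nu)} <= ||g - pi^f(g)||_{L2(nu)} e^{-sigma t},
   written with squared norms (sums of nonnegative terms in [0,+oo]). *)
Definition L2_rate {E : Type} (enum : nat -> option E)
  (P : R -> E -> E -> R) (pi f : E -> R) (sigma : R) : Prop :=
  0 < sigma /\ forall t g, 0 <= t -> in_L2 enum pi f g ->
    forall c, sum_le enum (fun i => nu pi f i * (g i - pif enum pi f g i) ^ 2) c ->
      sum_le enum
        (fun i => nu pi f i * (Pf enum P f t g i - pif enum pi f g i) ^ 2)
        (c * exp (- sigma * t) ^ 2).

Definition L2_exp_conv {E : Type} (enum : nat -> option E)
  (P : R -> E -> E -> R) (pi f : E -> R) : Prop :=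
  exists sigma, L2_rate enum P pi f sigma.

From Stdlib Require Import Reals Lra Lia Classical ClassicalEpsilon.
Open Scope R_scope.

(* Put [h = f g]. The [nu]-norm of [P^f_t g - pi^f(g)] is the [pi]-norm of [P_t h - pi(h)], so
   exponential L^2(nu) convergence is an L^2(pi) variance decay for the functions [h] with
   [pi(h^2) < oo].

   f-ergodicity with rate [eps] makes the covariance [c(r) = <h - pi(h), P_r h - pi(h)>_pi] decay
   like [K e^(-eps r)]. By reversibility and Chapman-Kolmogorov, [c(2t)] is the variance of [P_t h],
   and Cauchy-Schwarz gives [c(s)^2 <= c(0) c(2s)]; this log-convexity replaces [K] by
   [c(0) = Var_pi(h)], i.e. L^2 decay with the same rate. Conversely, the L^2 bound for
   [g = 1_{i0} / (pi f)(i0)] controls [sum_j (P_t(i0,j) - pi_j)^2 / pi_j], and AM-GM with weight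
   [e^(-sigma t)], together with [pi(f^2) < oo], turns it into the f-norm bound at rate [sigma].
   Both implications keep the rate, so the two sets of rates, and their suprema, coincide.
   Sums over [E] are handled by truncating [h] to finitely many states and letting the truncation
   grow. *)

Lemma Un_cv_const c : Un_cv (fun _ => c) c.
Proof. intros eps Heps; exists O; intros n _; unfold Rdist; rewrite Rminus_diag, Rabs_R0; exact Heps. Qed.

Lemma CV_sq (u : nat -> R) l : Un_cv u l -> Un_cv (fun n => u n ^ 2) (l ^ 2).
Proof.
  intros H; replace (l ^ 2) with (l * l) by ring.
  eapply Un_cv_ext; [|apply (CV_mult _ _ _ _ H H)]; intros n; cbv beta; ring.
Qed.

Lemma quadratic_ge0_discriminant A B x :
  0 <= B -> (forall l, 0 <= A + 2 * l * x + l ^ 2 * B) -> x ^ 2 <= A * B.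
Proof.
  intros HB H.
  destruct (Req_dec B 0) as [->|HB0].
  - destruct (Req_dec x 0) as [->|Hx]; [lra|].
    specialize (H (- (A + 1) / (2 * x))).
    replace (A + 2 * (- (A + 1) / (2 * x)) * x + (- (A + 1) / (2 * x)) ^ 2 * 0) with (-1)
      in H by (field; exact Hx); lra.
  - specialize (H (- x / B)).
    replace (A + 2 * (- x / B) * x + (- x / B) ^ 2 * B) with (A - x ^ 2 / B) in H
      by (field; exact HB0).
    apply Rmult_le_compat_r with (r := B) in H; [|exact HB].
    unfold Rdiv in H; rewrite Rmult_minus_distr_r, Rmult_assoc, Rinv_l in H by exact HB0; lra.
Qed.

Lemma Rabs_le_half_sq (x : R) : Rabs x <= (1 + x ^ 2) / 2.
Proof.
  pose proof (pow2_ge_0 (x - 1)); pose proof (pow2_ge_0 (x + 1)).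
  unfold Rabs; destruct (Rcase_abs x); nra.
Qed.

Lemma mul_abs_le_amgm (x d p l : R) :
  0 < p -> 0 < l -> x * Rabs d <= (l * (p * x ^ 2) + / l * (d ^ 2 / p)) / 2.
Proof.
  intros Hp Hl; apply Rmult_le_reg_r with (2 * l * p); [nra|].
  replace ((l * (p * x ^ 2) + / l * (d ^ 2 / p)) / 2 * (2 * l * p))
    with ((l * p * x) ^ 2 + Rabs d ^ 2) by (rewrite pow2_abs; field; lra).
  pose proof (pow2_ge_0 (l * p * x - Rabs d)); nra.
Qed.

(* [a (2^n t) >= (a t)^(2^n)], which is unbounded when [a t > 1]. *)
Lemma le_1_of_sq_le_dilate (a : R -> R) (B t : R) :
  0 <= t ->
  (forall s, 0 <= s -> 0 <= a s) ->
  (forall s, 0 <= s -> a s ^ 2 <= a (2 * s)) ->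
  (forall s, 0 <= s -> a s <= B) ->
  a t <= 1.
Proof.
  intros Ht Ha0 Ha_sq Ha_bd.
  assert (Ha_pow : forall n, a t ^ (2 ^ n) <= a (2 ^ n * t)).
  { induction n as [|n IH]; [simpl; rewrite Rmult_1_l, Rmult_1_r; lra|].
    rewrite Nat.pow_succ_r', Nat.mul_comm, pow_mult.
    replace (2 ^ S n * t) with (2 * (2 ^ n * t)) by (simpl; ring).
    pose proof (pow_le _ (2 ^ n) (Ha0 t Ht)); pose proof (pow_le 2 n ltac:(lra)).
    eapply Rle_trans; [|apply Ha_sq; nra].
    apply pow_incr; lra. }
  apply Rnot_lt_le; intros Hgt.
  destruct (Pow_x_infinity (a t) ltac:(rewrite Rabs_right; lra) (B + 1)) as [N HN].
  specialize (HN (2 ^ N)%nat (Nat.lt_le_incl _ _ (Nat.pow_gt_lin_r 2 N ltac:(lia)))).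
  rewrite Rabs_right in HN by (apply Rle_ge, pow_le; lra).
  pose proof (Ha_pow N); pose proof (pow_le 2 N ltac:(lra)).
  pose proof (Ha_bd (2 ^ N * t) ltac:(nra)); lra.
Qed.

Lemma decay_of_sq_le (q : R -> R) (A K eps t : R) :
  0 <= A -> 0 <= t ->
  (forall s, 0 <= s -> 0 <= q s) ->
  (forall s, 0 <= s -> q s ^ 2 <= A * q (2 * s)) ->
  (forall s, 0 <= s -> q s <= K * exp (- eps * s)) ->
  q t <= A * exp (- eps * t).
Proof.
  intros HA Ht Hq Hsq HK.
  destruct (Req_dec A 0) as [->|HA0].
  { specialize (Hsq t Ht); specialize (Hq t Ht); nra. }
  set (a s := q s * exp (eps * s) / A).
  assert (Hexp : forall s, exp (eps * s) * exp (- eps * s) = 1).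
  { intros s; rewrite <- exp_plus, <- exp_0; f_equal; ring. }
  assert (Hat : a t <= 1).
  { apply (le_1_of_sq_le_dilate a (K / A) t Ht).
    - intros s Hs; unfold a, Rdiv; apply Rmult_le_pos; [apply Rmult_le_pos|].
      + apply Hq, Hs.
      + left; apply exp_pos.
      + left; apply Rinv_0_lt_compat; lra.
    - intros s Hs; unfold a.
      replace (exp (eps * (2 * s))) with (exp (eps * s) ^ 2)
        by (simpl; rewrite Rmult_1_r, <- exp_plus; f_equal; ring).
      pose proof (Hsq s Hs); pose proof (exp_pos (eps * s)).
      apply Rmult_le_reg_r with (A ^ 2); [nra|].
      replace ((q s * exp (eps * s) / A) ^ 2 * A ^ 2) with (q s ^ 2 * exp (eps * s) ^ 2)
        by (field; exact HA0).
      replace (q (2 * s) * exp (eps * s) ^ 2 / A * A ^ 2)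
        with (A * q (2 * s) * exp (eps * s) ^ 2) by (field; exact HA0).
      apply Rmult_le_compat_r; [apply pow2_ge_0|exact H].
    - intros s Hs; unfold a, Rdiv; apply Rmult_le_compat_r; [left; apply Rinv_0_lt_compat; lra|].
      pose proof (HK s Hs); pose proof (exp_pos (eps * s)).
      replace K with (K * exp (- eps * s) * exp (eps * s))
        by (rewrite Rmult_assoc, Rmult_comm with (r1 := exp (- eps * s)), Hexp; ring).
      apply Rmult_le_compat_r; lra. }
  replace (q t) with (a t * A * exp (- eps * t))
    by (unfold a; field_simplify; [rewrite Rmult_assoc, Hexp; ring|exact HA0]).
  rewrite <- (Rmult_1_l (A * exp (- eps * t))), Rmult_assoc.
  apply Rmult_le_compat_r; [apply Rmult_le_pos; [lra|left; apply exp_pos]|exact Hat].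
Qed.

Definition psum {E : Type} (enum : nat -> option E) (n : nat) (F : E -> R) : R :=
  sum_f_R0 (lift enum F) n.

Section Series.
Context {E : Type} {enum : nat -> option E}.
Implicit Types (F G : E -> R).

Lemma lift_ext F G : (forall x, F x = G x) -> forall n, lift enum F n = lift enum G n.
Proof. intros H n; unfold lift; destruct (enum n); auto. Qed.

Lemma lift_ge0 F : (forall x, 0 <= F x) -> forall n, 0 <= lift enum F n.
Proof. intros H n; unfold lift; destruct (enum n); auto; lra. Qed.

Lemma psum_ext n F G : (forall x, F x = G x) -> psum enum n F = psum enum n G.
Proof. intros H; apply sum_eq; intros; apply lift_ext; auto. Qed.

Lemma psumD n F G : psum enum n (fun x => F x + G x) = psum enum n F + psum enum n G.
Proof.
  unfold psum; rewrite <- plus_sum; apply sum_eq; intros k _.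
  unfold lift; destruct (enum k); lra.
Qed.

Lemma psumZ n c F : psum enum n (fun x => c * F x) = c * psum enum n F.
Proof.
  unfold psum; rewrite scal_sum; apply sum_eq; intros k _.
  unfold lift; destruct (enum k); lra.
Qed.

Lemma psumB n F G : psum enum n (fun x => F x - G x) = psum enum n F - psum enum n G.
Proof.
  rewrite (psum_ext n _ (fun x => F x + -1 * G x)) by (intros; ring).
  rewrite psumD, psumZ; ring.
Qed.

Lemma psum_le n F G : (forall x, F x <= G x) -> psum enum n F <= psum enum n G.
Proof. intros H; apply sum_Rle; intros k _; unfold lift; destruct (enum k); [apply H | lra]. Qed.

Lemma psum_abs n F : Rabs (psum enum n F) <= psum enum n (fun x => Rabs (F x)).
Proof.
  eapply Rle_trans; [apply sum_f_R0_triangle|].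
  apply sum_Rle; intros k _; unfold lift; destruct (enum k); rewrite ?Rabs_R0; lra.
Qed.

Lemma psum_mul n F G :
  psum enum n F * psum enum n G = psum enum n (fun j => psum enum n (fun k => F j * G k)).
Proof.
  rewrite Rmult_comm, <- psumZ; apply psum_ext; intros j.
  rewrite Rmult_comm, <- psumZ; reflexivity.
Qed.

Lemma has_sum_psum F l : has_sum enum F l <-> Un_cv (fun n => psum enum n F) l.
Proof. reflexivity. Qed.

Lemma has_sum_ext F G l : (forall x, F x = G x) -> has_sum enum F l -> has_sum enum G l.
Proof.
  rewrite !has_sum_psum; intros H; apply Un_cv_ext; intros n; apply psum_ext, H.
Qed.

Lemma has_sum_eq F a b : has_sum enum F a -> a = b -> has_sum enum F b.
Proof. intros H ->; exact H. Qed.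

Lemma has_sum_unique F a b : has_sum enum F a -> has_sum enum F b -> a = b.
Proof. apply uniqueness_sum. Qed.

Lemma ssum_eq F l : has_sum enum F l -> ssum enum F = l.
Proof.
  intros H; apply (has_sum_unique F); [|exact H].
  apply (epsilon_spec (inhabits 0) (fun l => has_sum enum F l)); exists l; exact H.
Qed.

Lemma has_sum0 : has_sum enum (fun _ => 0) 0.
Proof.
  rewrite has_sum_psum; apply Un_cv_ext with (fun _ => 0); [|apply Un_cv_const].
  intros n; rewrite (psum_ext n _ (fun x => 0 * 0)), psumZ by (intros; ring); ring.
Qed.

Lemma has_sumD F G a b :
  has_sum enum F a -> has_sum enum G b -> has_sum enum (fun x => F x + G x) (a + b).
Proof.
  rewrite !has_sum_psum; intros HF HG.
  eapply Un_cv_ext; [|apply (CV_plus _ _ _ _ HF HG)]; intros n; rewrite psumD; reflexivity.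
Qed.

Lemma has_sumZ c F a : has_sum enum F a -> has_sum enum (fun x => c * F x) (c * a).
Proof.
  rewrite !has_sum_psum; intros HF.
  eapply Un_cv_ext; [|apply (CV_mult _ _ _ _ (Un_cv_const c) HF)]; intros n; rewrite psumZ; reflexivity.
Qed.

Lemma has_sumB F G a b :
  has_sum enum F a -> has_sum enum G b -> has_sum enum (fun x => F x - G x) (a - b).
Proof.
  intros HF HG; apply (has_sumZ (-1)) in HG.
  eapply has_sum_ext; [|eapply has_sum_eq; [apply (has_sumD _ _ _ _ HF HG)|ring]].
  intros; cbv beta; ring.
Qed.

Lemma has_sum_le F G a b :
  (forall x, F x <= G x) -> has_sum enum F a -> has_sum enum G b -> a <= b.
Proof. intros H HF HG; eapply Rle_cv_lim; [|exact HF|exact HG]; intros; apply psum_le, H. Qed.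

Lemma has_sum_ge0 F a : (forall x, 0 <= F x) -> has_sum enum F a -> 0 <= a.
Proof. intros H HF; eapply has_sum_le; [exact H|apply has_sum0|exact HF]. Qed.

Lemma psum_le_has_sum F l n : (forall x, 0 <= F x) -> has_sum enum F l -> psum enum n F <= l.
Proof. intros H HF; apply sum_incr; [exact HF|apply lift_ge0, H]. Qed.

Lemma has_sum_le_sum_le F l c : has_sum enum F l -> sum_le enum F c -> l <= c.
Proof. intros HF Hc; eapply Rle_cv_lim; [exact Hc|exact HF|apply Un_cv_const]. Qed.

Lemma has_sum_of_sum_le F c : (forall x, 0 <= F x) -> sum_le enum F c -> exists l, has_sum enum F l.
Proof.
  intros H Hc; destruct (growing_cv (fun n => psum enum n F)) as [l Hl].
  - intros n; unfold psum; simpl; pose proof (lift_ge0 F H (S n)); lra.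
  - exists c; intros x [n ->]; apply Hc.
  - exists l; exact Hl.
Qed.

Lemma has_sum_dominated F G L :
  (forall x, Rabs (F x) <= G x) -> has_sum enum G L -> exists l, has_sum enum F l.
Proof.
  intros H HG.
  (* the positive and negative parts of F are dominated by G *)
  assert (Hpart : forall s : R, s = 1 \/ s = -1 ->
            {l | Un_cv (sum_f_R0 (lift enum (fun x => (Rabs (F x) + s * F x) / 2))) l}).
  { intros s Hs; apply (Rseries_CV_comp _ (lift enum G)); [|exists L; exact HG].
    intros n; unfold lift; destruct (enum n) as [x|]; [|lra].
    specialize (H x); pose proof (Rle_abs (F x)); pose proof (Rle_abs (- F x)).
    rewrite Rabs_Ropp in *; destruct Hs as [->| ->]; lra. }
  destruct (Hpart 1 (or_introl eq_refl)) as [l1 H1].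
  destruct (Hpart (-1) (or_intror eq_refl)) as [l2 H2].
  exists (l1 - l2); eapply has_sum_ext; [|exact (has_sumB _ _ _ _ H1 H2)].
  intros x; cbv beta; field.
Qed.

Lemma has_sum_psum_fun n (A : E -> E -> R) (a : E -> R) :
  (forall j, has_sum enum (A j) (a j)) ->
  has_sum enum (fun x => psum enum n (fun j => A j x)) (psum enum n a).
Proof.
  intros H.
  assert (Hk : forall k, has_sum enum (fun x => lift enum (fun j => A j x) k) (lift enum a k)).
  { intros k; unfold lift; destruct (enum k); [apply H|apply has_sum0]. }
  unfold psum; induction n; simpl; [apply Hk|apply has_sumD; [exact IHn|apply Hk]].
Qed.

Lemma has_sum_cauchy_schwarz (w a b : E -> R) x A B :
  (forall i, 0 <= w i) ->
  has_sum enum (fun i => w i * a i * b i) x ->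
  has_sum enum (fun i => w i * a i ^ 2) A ->
  has_sum enum (fun i => w i * b i ^ 2) B -> x ^ 2 <= A * B.
Proof.
  intros Hw Hx HA HB; apply quadratic_ge0_discriminant.
  - eapply has_sum_ge0; [|exact HB]; intros i; apply Rmult_le_pos; [apply Hw|apply pow2_ge_0].
  - intros l; apply (has_sum_ge0 (fun i => w i * (a i + l * b i) ^ 2)).
    + intros i; apply Rmult_le_pos; [apply Hw|apply pow2_ge_0].
    + eapply has_sum_ext;
        [|exact (has_sumD _ _ _ _ (has_sumD _ _ _ _ HA (has_sumZ (2 * l) _ _ Hx))
                   (has_sumZ (l ^ 2) _ _ HB))].
      intros i; cbv beta; ring.
Qed.

Lemma Un_cv_psum N (u : nat -> E -> R) (U : E -> R) :
  (forall x, Un_cv (fun n => u n x) (U x)) -> Un_cv (fun n => psum enum N (u n)) (psum enum N U).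
Proof.
  intros H; unfold psum; induction N as [|N IH]; simpl.
  - unfold lift; destruct (enum O); [apply H|apply Un_cv_const].
  - apply CV_plus; [exact IH|unfold lift; destruct (enum (S N)); [apply H|apply Un_cv_const]].
Qed.

End Series.

Lemma enumerates_index {E : Type} (enum : nat -> option E) :
  enumerates enum ->
  exists idx : E -> nat,
    (forall x, enum (idx x) = Some x) /\ (forall k x, enum k = Some x -> k = idx x).
Proof.
  intros H; exists (fun x => proj1_sig (constructive_indefinite_description _ (H x))).
  split.
  - intros x; destruct (constructive_indefinite_description _ (H x)) as [n [Hn Hu]]; exact Hn.
  - intros k x Hk; destruct (constructive_indefinite_description _ (H x)) as [n [Hn Hu]].
    symmetry; apply Hu, Hk.
Qed.

Section Enumerated.
Context {E : Type} {enum : nat -> option E} (idx : E -> nat).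
Hypothesis enum_idx : forall x, enum (idx x) = Some x.
Hypothesis idx_enum : forall k x, enum k = Some x -> k = idx x.
Implicit Types (F : E -> R).

Lemma term_le_psum F x : (forall y, 0 <= F y) -> F x <= psum enum (idx x) F.
Proof.
  intros H; unfold psum.
  replace (F x) with (lift enum F (idx x)) by (unfold lift; rewrite enum_idx; reflexivity).
  destruct (idx x) as [|k]; simpl; [lra|].
  pose proof (cond_pos_sum _ k (lift_ge0 (enum := enum) F H)); lra.
Qed.

Lemma term_le_has_sum F x l : (forall y, 0 <= F y) -> has_sum enum F l -> F x <= l.
Proof. intros H HF; eapply Rle_trans; [apply term_le_psum, H|apply psum_le_has_sum; auto]. Qed.

Definition restrict (n : nat) F (i : E) : R := if (idx i <=? n)%nat then F i else 0.

Lemma lift_restrict n F k :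
  lift enum (restrict n F) k = if (k <=? n)%nat then lift enum F k else 0.
Proof.
  unfold lift, restrict; destruct (enum k) as [x|] eqn:Ek; [|destruct (k <=? n)%nat; auto].
  rewrite <- (idx_enum k x Ek); reflexivity.
Qed.

Lemma has_sum_restrict n F : has_sum enum (restrict n F) (psum enum n F).
Proof.
  intros eps Heps; exists n; intros m Hm.
  replace (sum_f_R0 (lift enum (restrict n F)) m) with (psum enum n F).
  { unfold Rdist; rewrite Rminus_diag, Rabs_R0; exact Heps. }
  unfold psum; induction Hm as [|m Hm IH]; simpl.
  - apply sum_eq; intros k Hk; rewrite lift_restrict.
    destruct (Nat.leb_spec k n); [reflexivity|lia].
  - rewrite <- IH, lift_restrict; destruct (Nat.leb_spec (S m) n); [lia|ring].
Qed.

Lemma psum_single F x0 n :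
  (forall x, x <> x0 -> F x = 0) -> psum enum n F = if (idx x0 <=? n)%nat then F x0 else 0.
Proof.
  intros H.
  assert (Hlift : forall k, lift enum F k = if (k =? idx x0)%nat then F x0 else 0).
  { intros k; unfold lift; destruct (enum k) as [x|] eqn:Ek; destruct (Nat.eqb_spec k (idx x0)).
    - subst k; rewrite enum_idx in Ek; injection Ek as ->; reflexivity.
    - apply H; intros ->; apply n0, idx_enum, Ek.
    - subst k; rewrite enum_idx in Ek; discriminate.
    - reflexivity. }
  unfold psum; induction n; simpl; rewrite Hlift.
  - destruct (Nat.eqb_spec 0 (idx x0)); destruct (Nat.leb_spec (idx x0) 0); auto; lia.
  - rewrite IHn; destruct (Nat.eqb_spec (S n) (idx x0)); destruct (Nat.leb_spec (idx x0) n);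
      destruct (Nat.leb_spec (idx x0) (S n)); try lia; ring.
Qed.

Lemma has_sum_single F x0 : (forall x, x <> x0 -> F x = 0) -> has_sum enum F (F x0).
Proof.
  intros H eps Heps; exists (idx x0); intros n Hn.
  change (sum_f_R0 (lift enum F) n) with (psum enum n F).
  rewrite (psum_single F x0) by exact H; destruct (Nat.leb_spec (idx x0) n); [|lia].
  unfold Rdist; rewrite Rminus_diag, Rabs_R0; exact Heps.
Qed.

Lemma sum_le_single F x0 : (forall x, x <> x0 -> F x = 0) -> sum_le enum F (Rabs (F x0)).
Proof.
  intros H n; change (psum enum n F <= Rabs (F x0)).
  rewrite (psum_single F x0) by exact H; destruct (idx x0 <=? n)%nat; [apply Rle_abs|apply Rabs_pos].
Qed.

End Enumerated.

Section ReversibleChain.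
Context {E : Type} {enum : nat -> option E} (idx : E -> nat).
Hypothesis enum_idx : forall x, enum (idx x) = Some x.
Hypothesis idx_enum : forall k x, enum k = Some x -> k = idx x.
Variables (P : R -> E -> E -> R) (pi : E -> R).
Hypothesis P_ge0 : forall t i j, 0 <= t -> 0 <= P t i j.
Hypothesis P_row : forall t i, 0 <= t -> has_sum enum (P t i) 1.
Hypothesis P_ck : forall s t i k, 0 <= s -> 0 <= t ->
  has_sum enum (fun j => P s i j * P t j k) (P (s + t) i k).
Hypothesis P_irr : irreducible P.
Hypothesis pi_ge0 : forall i, 0 <= pi i.
Hypothesis pi_sum : has_sum enum pi 1.
Hypothesis pi_inv : forall t j, 0 <= t -> has_sum enum (fun i => pi i * P t i j) (pi j).
Hypothesis P_rev : reversible P pi.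

Lemma pi_pos i : 0 < pi i.
Proof.
  assert (Hk : exists k, 0 < pi k).
  { apply NNPP; intros Hno.
    assert (Hzero : has_sum enum pi 0).
    { apply has_sum_ext with (fun _ => 0); [|apply has_sum0].
      intros k; destruct (pi_ge0 k) as [Hk|Hk]; [exfalso; eauto|auto]. }
    pose proof (has_sum_unique _ _ _ pi_sum Hzero); lra. }
  destruct Hk as [k Hk].
  apply Rlt_le_trans with (pi k * P 1 k i); [apply Rmult_lt_0_compat; [exact Hk|apply P_irr; lra]|].
  apply (term_le_has_sum idx enum_idx (fun k => pi k * P 1 k i)); [|apply pi_inv; lra].
  intros y; apply Rmult_le_pos; [apply pi_ge0|apply P_ge0; lra].
Qed.

Lemma pi_mul_P_le t i j : 0 <= t -> pi i * P t i j <= pi j.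
Proof.
  intros Ht; rewrite (P_rev t i j Ht).
  assert (P t j i <= 1) by (apply (term_le_has_sum idx enum_idx (P t j)); auto).
  pose proof (pi_ge0 j); nra.
Qed.

(* [mean n h] and [Pn n h s] are [pi(h)] and [P_s h] for [h] restricted to the first [n]
   enumerated states; [cov n h r] is then [<h - pi(h), P_r h - pi(h)>_pi] for that restriction. *)
Definition mean n (h : E -> R) := psum enum n (fun j => pi j * h j).
Definition Pn n (h : E -> R) s i := psum enum n (fun j => P s i j * h j).
Definition cov n (h : E -> R) r :=
  psum enum n (fun j => psum enum n (fun k => h j * h k * pi j * P r j k)) - mean n h ^ 2.

Lemma has_sum_pi_Pn n h s : 0 <= s -> has_sum enum (fun i => pi i * Pn n h s i) (mean n h).
Proof.
  intros Hs; unfold mean.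
  apply has_sum_ext with (fun i => psum enum n (fun j => h j * (pi i * P s i j))).
  { intros i; unfold Pn; rewrite <- psumZ; apply psum_ext; intros; ring. }
  rewrite (psum_ext n _ (fun j => h j * pi j)) by (intros; ring).
  apply (has_sum_psum_fun n (fun j i => h j * (pi i * P s i j))).
  intros j; apply has_sumZ, pi_inv, Hs.
Qed.

(* Reversibility and Chapman-Kolmogorov: [<P_t h, P_t h>_pi = <h, P_(2t) h>_pi]. *)
Lemma has_sum_var_Pn n h t : 0 <= t ->
  has_sum enum (fun i => pi i * (Pn n h t i - mean n h) ^ 2) (cov n h (2 * t)).
Proof.
  intros Ht; set (m := mean n h).
  assert (Hsq : has_sum enum (fun i => pi i * Pn n h t i ^ 2)
                  (psum enum n (fun j => psum enum n (fun k => h j * h k * pi j * P (2 * t) j k)))).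
  { apply has_sum_ext with (fun i => psum enum n (fun j => psum enum n
                              (fun k => h j * h k * (pi j * (P t j i * P t i k))))).
    { intros i; unfold Pn; rewrite <- Rsqr_pow2; unfold Rsqr; rewrite psum_mul, <- psumZ.
      apply psum_ext; intros j; rewrite <- psumZ; apply psum_ext; intros k.
      replace (pi j * (P t j i * P t i k)) with (pi j * P t j i * P t i k) by ring.
      rewrite <- (P_rev t i j Ht); ring. }
    apply (has_sum_psum_fun n (fun j i => psum enum n
             (fun k => h j * h k * (pi j * (P t j i * P t i k))))); intros j.
    apply (has_sum_psum_fun n (fun k i => h j * h k * (pi j * (P t j i * P t i k)))); intros k.
    replace (2 * t) with (t + t) by ring.
    replace (h j * h k * pi j * P (t + t) j k) with (h j * h k * (pi j * P (t + t) j k)) by ring.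
    apply has_sumZ, has_sumZ, P_ck; exact Ht. }
  pose proof (has_sumB _ _ _ _ Hsq (has_sumZ (2 * m) _ _ (has_sum_pi_Pn n h t Ht))) as H1.
  pose proof (has_sumD _ _ _ _ H1 (has_sumZ (m ^ 2) _ _ pi_sum)) as H2.
  eapply has_sum_ext; [|eapply has_sum_eq; [exact H2|unfold cov; fold m; ring]].
  intros i; cbv beta; ring.
Qed.

Lemma has_sum_cov n h s : 0 <= s ->
  has_sum enum (fun i => pi i * (restrict idx n h i - mean n h) * (Pn n h s i - mean n h))
    (cov n h s).
Proof.
  intros Hs; set (m := mean n h).
  assert (Hhp : has_sum enum (restrict idx n (fun i => pi i * h i * Pn n h s i))
                  (psum enum n (fun j => psum enum n (fun k => h j * h k * pi j * P s j k)))).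
  { eapply has_sum_eq; [apply has_sum_restrict; exact idx_enum|].
    apply psum_ext; intros j; unfold Pn; rewrite <- psumZ; apply psum_ext; intros; ring. }
  pose proof (has_sum_restrict idx idx_enum n (fun i => pi i * h i)) as Hh.
  change (psum enum n (fun i => pi i * h i)) with m in Hh.
  pose proof (has_sumB _ _ _ _ Hhp (has_sumZ m _ _ Hh)) as H1.
  pose proof (has_sumB _ _ _ _ H1 (has_sumZ m _ _ (has_sum_pi_Pn n h s Hs))) as H2.
  pose proof (has_sumD _ _ _ _ H2 (has_sumZ (m ^ 2) _ _ pi_sum)) as H3.
  eapply has_sum_ext; [|eapply has_sum_eq; [exact H3|unfold cov; fold m; ring]].
  intros i; cbv beta; unfold restrict; destruct (idx i <=? n)%nat; ring.
Qed.

Lemma has_sum_var n h :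
  has_sum enum (fun i => pi i * (restrict idx n h i - mean n h) ^ 2)
    (psum enum n (fun i => pi i * h i ^ 2) - mean n h ^ 2).
Proof.
  set (m := mean n h).
  pose proof (has_sum_restrict idx idx_enum n (fun i => pi i * h i ^ 2)) as Hh2.
  pose proof (has_sum_restrict idx idx_enum n (fun i => pi i * h i)) as Hh.
  change (psum enum n (fun i => pi i * h i)) with m in Hh.
  pose proof (has_sumB _ _ _ _ Hh2 (has_sumZ (2 * m) _ _ Hh)) as H1.
  pose proof (has_sumD _ _ _ _ H1 (has_sumZ (m ^ 2) _ _ pi_sum)) as H2.
  eapply has_sum_ext; [|eapply has_sum_eq; [exact H2|ring]].
  intros i; cbv beta; unfold restrict; destruct (idx i <=? n)%nat; ring.
Qed.

Lemma cov_psum n h r :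
  cov n h r = psum enum n (fun j => psum enum n (fun k => h j * h k * pi j * (P r j k - pi k))).
Proof.
  unfold cov, mean; rewrite <- Rsqr_pow2; unfold Rsqr; rewrite psum_mul, <- psumB.
  apply psum_ext; intros j; rewrite <- psumB; apply psum_ext; intros k; ring.
Qed.

Lemma has_sum_pi_mul h S2 :
  has_sum enum (fun i => pi i * h i ^ 2) S2 -> exists m, has_sum enum (fun i => pi i * h i) m.
Proof.
  intros HS2.
  apply (has_sum_dominated _ (fun i => / 2 * pi i + / 2 * (pi i * h i ^ 2)) (/ 2 * 1 + / 2 * S2)).
  - intros i; rewrite Rabs_mult, (Rabs_right (pi i)) by (apply Rle_ge, pi_ge0).
    pose proof (Rabs_le_half_sq (h i)); pose proof (pi_ge0 i); nra.
  - apply has_sumD; apply has_sumZ; assumption.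
Qed.

Lemma has_sum_P_mul h S2 t i :
  has_sum enum (fun j => pi j * h j ^ 2) S2 -> 0 <= t ->
  exists w, has_sum enum (fun j => P t i j * h j) w.
Proof.
  intros HS2 Ht; pose proof (pi_pos i) as Hi.
  apply (has_sum_dominated _ (fun j => / pi i * (/ 2 * pi j + / 2 * (pi j * h j ^ 2)))
           (/ pi i * (/ 2 * 1 + / 2 * S2))).
  - intros j; rewrite Rabs_mult, (Rabs_right (P t i j)) by (apply Rle_ge, P_ge0, Ht).
    assert (HP : P t i j <= / pi i * pi j).
    { apply Rmult_le_reg_l with (pi i); [exact Hi|].
      rewrite <- Rmult_assoc, Rinv_r, Rmult_1_l by lra; apply pi_mul_P_le, Ht. }
    eapply Rle_trans; [apply Rmult_le_compat_r; [apply Rabs_pos|exact HP]|].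
    replace (/ pi i * (/ 2 * pi j + / 2 * (pi j * h j ^ 2)))
      with (/ pi i * pi j * ((1 + h j ^ 2) / 2)) by (field; lra).
    apply Rmult_le_compat_l; [|apply Rabs_le_half_sq].
    apply Rmult_le_pos; [left; apply Rinv_0_lt_compat, Hi|apply pi_ge0].
  - apply has_sumZ, has_sumD; apply has_sumZ; assumption.
Qed.

Variable f : E -> R.
Hypothesis f_ge1 : forall i, 1 <= f i.

Section ErgodicBound.
Variables (C : E -> R) (eps : R).
Hypothesis P_ergodic : forall j r, 0 <= r ->
  sum_le enum (fun k => f k * Rabs (P r j k - pi k)) (C j * exp (- eps * r)).

Lemma P_dist_le_exp r j k : 0 <= r -> Rabs (P r j k - pi k) <= C j * exp (- eps * r).
Proof.
  intros Hr.
  assert (Hterm : forall k, Rabs (P r j k - pi k) <= f k * Rabs (P r j k - pi k)).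
  { intros k'; pose proof (f_ge1 k'); pose proof (Rabs_pos (P r j k' - pi k')); nra. }
  eapply Rle_trans; [|apply (P_ergodic j r Hr (idx k))].
  eapply Rle_trans; [apply Hterm|apply (term_le_psum idx enum_idx (fun k => f k * Rabs (P r j k - pi k)))].
  intros y; eapply Rle_trans; [apply Rabs_pos|apply Hterm].
Qed.

Lemma cov_le_exp n h : exists K, forall r, 0 <= r -> cov n h r <= K * exp (- eps * r).
Proof.
  exists (psum enum n (fun j => psum enum n (fun k => Rabs (h j * h k * pi j) * C j))).
  intros r Hr; rewrite cov_psum, (Rmult_comm _ (exp _)), <- psumZ.
  eapply Rle_trans; [apply Rle_abs|]; eapply Rle_trans; [apply psum_abs|].
  apply psum_le; intros j; eapply Rle_trans; [apply psum_abs|].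
  rewrite <- psumZ; apply psum_le; intros k.
  replace (exp (- eps * r) * (Rabs (h j * h k * pi j) * C j))
    with (Rabs (h j * h k * pi j) * (C j * exp (- eps * r))) by ring.
  rewrite (Rabs_mult (h j * h k * pi j)).
  apply Rmult_le_compat_l; [apply Rabs_pos|apply P_dist_le_exp, Hr].
Qed.

(* Cauchy-Schwarz gives [cov(s)^2 <= cov(0) cov(2s)]: [cov] is log-convex, so any exponential
   decay rate of [cov] is attained with the constant [cov(0)]. *)
Lemma cov_decay n h r : 0 <= r ->
  cov n h r <= (psum enum n (fun i => pi i * h i ^ 2) - mean n h ^ 2) * exp (- eps * r).
Proof.
  intros Hr; destruct (cov_le_exp n h) as [K HK].
  assert (Hw : forall (u : E -> R) i, 0 <= pi i * u i ^ 2)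
    by (intros; apply Rmult_le_pos; [apply pi_ge0|apply pow2_ge_0]).
  apply (decay_of_sq_le (cov n h) _ K); auto.
  - eapply has_sum_ge0; [|apply has_sum_var]; intros i; apply (Hw (fun i => _ - _)).
  - intros s Hs; replace s with (2 * (s / 2)) by field.
    eapply has_sum_ge0; [|apply has_sum_var_Pn; lra]; intros i; apply (Hw (fun i => _ - _)).
  - intros s Hs; apply (has_sum_cauchy_schwarz pi _ _ _ _ _ pi_ge0 (has_sum_cov n h s Hs)).
    + apply has_sum_var.
    + apply has_sum_var_Pn, Hs.
Qed.

Lemma var_P_decay h S2 m (w : E -> R) t N :
  has_sum enum (fun i => pi i * h i ^ 2) S2 -> has_sum enum (fun i => pi i * h i) m ->
  (forall i, has_sum enum (fun j => P t i j * h j) (w i)) -> 0 <= t ->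
  psum enum N (fun i => pi i * (w i - m) ^ 2) <= (S2 - m ^ 2) * exp (- eps * (2 * t)).
Proof.
  intros HS2 Hm Hw Ht.
  apply (Rle_cv_lim (Un := fun n => psum enum N (fun i => pi i * (Pn n h t i - mean n h) ^ 2))
           (Vn := fun n => (psum enum n (fun i => pi i * h i ^ 2) - mean n h ^ 2) * exp (- eps * (2 * t)))).
  - intros n; eapply Rle_trans; [apply psum_le_has_sum; [|apply has_sum_var_Pn, Ht]|].
    + intros i; apply Rmult_le_pos; [apply pi_ge0|apply pow2_ge_0].
    + apply cov_decay; lra.
  - apply Un_cv_psum; intros i.
    apply (CV_mult _ _ _ _ (Un_cv_const (pi i))), CV_sq, CV_minus; [apply Hw|apply Hm].
  - apply CV_mult; [apply CV_minus; [exact HS2|apply CV_sq, Hm]|apply Un_cv_const].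
Qed.

End ErgodicBound.

Lemma f_ergodic_rate_L2_rate eps : f_ergodic_rate enum P pi f eps -> L2_rate enum P pi f eps.
Proof.
  intros [Heps [C HC]]; split; [exact Heps|]; intros t g Ht [c2 Hc2] c Hc N.
  assert (Hf0 : forall i, f i <> 0) by (intros i; pose proof (f_ge1 i); lra).
  set (h i := f i * g i).
  destruct (has_sum_of_sum_le _ c2 (fun i => Rmult_le_pos _ _
              (Rmult_le_pos _ _ (pow2_ge_0 (f i)) (pi_ge0 i)) (pow2_ge_0 (g i))) Hc2) as [S2 HS2nu].
  assert (HS2 : has_sum enum (fun i => pi i * h i ^ 2) S2)
    by (eapply has_sum_ext; [|exact HS2nu]; intros i; unfold nu, h; ring).
  destruct (has_sum_pi_mul h S2 HS2) as [m Hm].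
  set (w i := ssum enum (fun j => P t i j * h j)).
  assert (Hw : forall i, has_sum enum (fun j => P t i j * h j) (w i)).
  { intros i; destruct (has_sum_P_mul h S2 t i HS2 Ht) as [l Hl].
    unfold w; rewrite (ssum_eq _ _ Hl); exact Hl. }
  assert (Hpif : forall i, pif enum pi f g i = m / f i).
  { intros i; unfold pif; rewrite (ssum_eq _ m); [unfold Rdiv; ring|].
    eapply has_sum_ext; [|exact Hm]; intros; unfold h; ring. }
  assert (HPf : forall i, Pf enum P f t g i = w i / f i) by (intros i; unfold Pf, w, h, Rdiv; ring).
  assert (Hvar : S2 - m ^ 2 <= c).
  { eapply has_sum_le_sum_le; [|exact Hc].
    pose proof (has_sumB _ _ _ _ HS2 (has_sumZ (2 * m) _ _ Hm)) as H1.
    pose proof (has_sumD _ _ _ _ H1 (has_sumZ (m ^ 2) _ _ pi_sum)) as H2.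
    eapply has_sum_ext; [|eapply has_sum_eq; [exact H2|ring]].
    intros i; cbv beta; rewrite Hpif; unfold nu, h; field; apply Hf0. }
  change (psum enum N (fun i => nu pi f i * (Pf enum P f t g i - pif enum pi f g i) ^ 2)
          <= c * exp (- eps * t) ^ 2).
  rewrite (psum_ext N _ (fun i => pi i * (w i - m) ^ 2))
    by (intros i; rewrite HPf, Hpif; unfold nu; field; apply Hf0).
  replace (exp (- eps * t) ^ 2) with (exp (- eps * (2 * t)))
    by (simpl; rewrite Rmult_1_r, <- exp_plus; f_equal; ring).
  eapply Rle_trans; [apply (var_P_decay C eps HC h S2 m w t N HS2 Hm Hw Ht)|].
  apply Rmult_le_compat_r; [left; apply exp_pos|exact Hvar].
Qed.

Section PointMass.
Variable i0 : E.

(* [f * point_mass] is the density [1_{i0} / pi i0] of the Dirac mass at [i0] w.r.t. [pi]. *)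
Definition point_mass (k : E) : R :=
  if excluded_middle_informative (k = i0) then / (pi i0 * f i0) else 0.

Lemma point_mass_off k : k <> i0 -> point_mass k = 0.
Proof. intros Hk; unfold point_mass; destruct (excluded_middle_informative (k = i0)); tauto. Qed.

Lemma f_point_mass_at : f i0 * point_mass i0 = / pi i0.
Proof.
  unfold point_mass; destruct (excluded_middle_informative (i0 = i0)) as [_|]; [|tauto].
  pose proof (pi_pos i0); pose proof (f_ge1 i0); field; lra.
Qed.

Lemma has_sum_point_mass (F : E -> R) :
  has_sum enum (fun j => F j * (f j * point_mass j)) (F i0 / pi i0).
Proof.
  eapply has_sum_eq; [apply (has_sum_single idx enum_idx idx_enum)|].
  - intros x Hx; cbv beta; rewrite point_mass_off by exact Hx; ring.
  - cbv beta; rewrite f_point_mass_at; reflexivity.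
Qed.

Lemma pif_point_mass k : pif enum pi f point_mass k = / f k.
Proof.
  unfold pif; rewrite (ssum_eq _ 1); [ring|].
  eapply has_sum_ext; [|eapply has_sum_eq; [apply (has_sum_point_mass pi)|]].
  - intros j; cbv beta; ring.
  - pose proof (pi_pos i0); field; lra.
Qed.

Lemma Pf_point_mass t k : 0 <= t -> Pf enum P f t point_mass k = P t i0 k / (pi k * f k).
Proof.
  intros Ht; unfold Pf; rewrite (ssum_eq _ _ (has_sum_point_mass (P t k))).
  pose proof (pi_pos i0); pose proof (pi_pos k); pose proof (f_ge1 k).
  apply Rmult_eq_reg_l with (pi k * pi i0 * f k);
    [|apply Rgt_not_eq, Rmult_lt_0_compat; [apply Rmult_lt_0_compat|]; lra].
  replace (pi k * pi i0 * f k * (/ f k * (P t k i0 / pi i0))) with (pi k * P t k i0) by (field; lra).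
  rewrite (P_rev t k i0 Ht); field; lra.
Qed.

Lemma in_L2_point_mass : in_L2 enum pi f point_mass.
Proof.
  eexists; apply (sum_le_single idx enum_idx idx_enum _ i0).
  intros x Hx; rewrite point_mass_off by exact Hx; ring.
Qed.

Lemma var_point_mass_le :
  sum_le enum (fun i => nu pi f i * (point_mass i - pif enum pi f point_mass i) ^ 2)
    (2 / pi i0 + 2).
Proof.
  intros n; change (psum enum n (fun i => nu pi f i * (point_mass i - pif enum pi f point_mass i) ^ 2)
                    <= 2 / pi i0 + 2).
  eapply Rle_trans; [apply (psum_le n _ (fun i => 2 * (pi i * (f i * point_mass i) ^ 2) + 2 * pi i))|].
  - intros i; rewrite pif_point_mass; unfold nu.
    replace (f i ^ 2 * pi i * (point_mass i - / f i) ^ 2) with (pi i * (f i * point_mass i - 1) ^ 2)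
      by (pose proof (f_ge1 i); field; lra).
    pose proof (pi_ge0 i); pose proof (pow2_ge_0 (f i * point_mass i + 1)); nra.
  - rewrite psumD, !psumZ.
    assert (psum enum n (fun i => pi i * (f i * point_mass i) ^ 2) <= / pi i0).
    { eapply Rle_trans; [apply (sum_le_single idx enum_idx idx_enum _ i0)|].
      - intros x Hx; rewrite point_mass_off by exact Hx; ring.
      - cbv beta; rewrite f_point_mass_at, Rabs_right; [pose proof (pi_pos i0); right; field; lra|].
        apply Rle_ge, Rmult_le_pos; [apply pi_ge0|apply pow2_ge_0]. }
    assert (psum enum n pi <= 1) by (apply psum_le_has_sum; [exact pi_ge0|exact pi_sum]).
    unfold Rdiv; lra.
Qed.

Lemma f_dist_le_amgm t k l : 0 <= t -> 0 < l ->
  f k * Rabs (P t i0 k - pi k)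
  <= (l * (pi k * f k ^ 2)
      + / l * (nu pi f k * (Pf enum P f t point_mass k - pif enum pi f point_mass k) ^ 2)) / 2.
Proof.
  intros Ht Hl; rewrite Pf_point_mass, pif_point_mass by exact Ht.
  pose proof (pi_pos k); pose proof (f_ge1 k).
  replace (nu pi f k * (P t i0 k / (pi k * f k) - / f k) ^ 2) with ((P t i0 k - pi k) ^ 2 / pi k)
    by (unfold nu; field; lra).
  apply mul_abs_le_amgm; assumption.
Qed.

End PointMass.

Lemma L2_rate_f_ergodic_rate sigma :
  sum_finite enum (fun i => pi i * f i ^ 2) -> L2_rate enum P pi f sigma ->
  f_ergodic_rate enum P pi f sigma.
Proof.
  intros [M HM] [Hsigma HL]; split; [exact Hsigma|].
  exists (fun i => (M + (2 / pi i + 2)) / 2); intros i0 t Ht N.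
  set (l := exp (- sigma * t)); assert (Hl : 0 < l) by apply exp_pos.
  specialize (HL t (point_mass i0) Ht (in_L2_point_mass i0) _ (var_point_mass_le i0) N).
  change (psum enum N (fun j => f j * Rabs (P t i0 j - pi j)) <= (M + (2 / pi i0 + 2)) / 2 * l).
  eapply Rle_trans; [apply psum_le; intros k; apply (f_dist_le_amgm i0 t k l Ht Hl)|].
  rewrite (psum_ext N _ (fun k => / 2 * l * (pi k * f k ^ 2) + / (2 * l) *
             (nu pi f k * (Pf enum P f t (point_mass i0) k - pif enum pi f (point_mass i0) k) ^ 2)))
    by (intros; field; lra).
  rewrite psumD, !psumZ.
  change (psum enum N (fun i => nu pi f i * (Pf enum P f t (point_mass i0) i
            - pif enum pi f (point_mass i0) i) ^ 2) <= (2 / pi i0 + 2) * l ^ 2) in HL.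
  pose proof (HM N) as HM'; change (psum enum N (fun i => pi i * f i ^ 2) <= M) in HM'.
  apply Rmult_le_compat_l with (r := / (2 * l)) in HL; [|left; apply Rinv_0_lt_compat; lra].
  apply Rmult_le_compat_l with (r := / 2 * l) in HM'; [|lra].
  replace ((M + (2 / pi i0 + 2)) / 2 * l) with (/ 2 * l * M + / (2 * l) * ((2 / pi i0 + 2) * l ^ 2))
    by (pose proof (pi_pos i0); field; repeat split; lra).
  lra.
Qed.

End ReversibleChain.

Theorem theorem3p3 (E : Type) (enum : nat -> option E) (Henum : enumerates enum)
  (P : R -> E -> E -> R) (pi : E -> R)
  (Hpr : positive_recurrent enum P pi) (Hrev : reversible P pi)
  (f : E -> R) (Hf1 : forall i, 1 <= f i)
  (Hf2 : sum_finite enum (fun i => pi i * f i ^ 2)) :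
  (exp_f_ergodic enum P pi f <-> L2_exp_conv enum P pi f) /\
  (* eps_max = sigma_max, as suprema in (0, +oo]: same upper bounds *)
  (forall x : R,
     is_upper_bound (fun e => f_ergodic_rate enum P pi f e) x <->
     is_upper_bound (fun s => L2_rate enum P pi f s) x).
Proof.
  destruct (enumerates_index enum Henum) as [idx [enum_idx idx_enum]].
  destruct Hpr as [[HP0 [Hrow [_ [Hck _]]]] [Hirr [Hpi0 [Hpi1 Hinv]]]].
  assert (Hto : forall e, f_ergodic_rate enum P pi f e -> L2_rate enum P pi f e)
    by (intros e; apply (f_ergodic_rate_L2_rate idx); assumption).
  assert (Hfrom : forall s, L2_rate enum P pi f s -> f_ergodic_rate enum P pi f s)
    by (intros s; apply (L2_rate_f_ergodic_rate idx); assumption).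
  split.
  - split; intros [r Hr]; exists r; auto.
  - intros x; split; intros Hub r Hr; apply Hub; auto.
Qed.
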